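(* Let $G$ be a finite group, $m$ a positive integer and $n$ a positive odd integer. Then $P_e(G)\cong P_e\big((\prod_{i=1}^{m}\mathbb{Z}_2)\times\mathbb{Z}_n\big)$ if and only if $G\cong (\prod_{i=1}^{m}\mathbb{Z}_2)\times\mathbb{Z}_n$.
   Context: All groups are finite. $\mathbb{Z}_k$ denotes the cyclic group of order $k$, and $\prod_{i=1}^m\mathbb{Z}_2$ the direct product of $m$ copies of $\mathbb{Z}_2$. For a group $X$, the enhanced power graph $P_e(X)$ is the simple graph with vertex set $X$ in which two distinct vertices $x,y$ are adjacent if and only if $\langle x,y\rangle$ is cyclic. *)

From HB Require Import structures.
From mathcomp Require Import all_boot all_fingroup all_algebra all_solvable.
Set Implicit Arguments. Unset Strict Implicit. Unset Printing Implicit Defensive.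
Local Open Scope group_scope.

Definition epg_adj (gT : finGroupType) (x y : gT) : bool :=
  (x != y) && cyclic <<[set x; y]>>.

Definition epg_isomorphic (gT hT : finGroupType) (G : {set gT}) (H : {set hT}) : Prop :=
  exists f : gT -> hT,
    [/\ {in G &, injective f}, f @: G = H &
        {in G &, forall x y, epg_adj (f x) (f y) = epg_adj x y}].

Definition Z2m_Zn_type (m n : nat) : finGroupType :=
  ({dffun forall i : 'I_m, 'Z_2} * 'Z_n)%type.

(* The group (prod_{i=1}^m Z_2) x Z_n: all of the first factor times the
   cyclic subgroup Zp n of order n (which is all of 'Z_n when n > 1, and
   trivial when n = 1). *)
Definition Z2m_Zn (m n : nat) : {set Z2m_Zn_type m n} :=
  setX [set: {dffun forall i : 'I_m, 'Z_2}] (Zp n).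

Lemma Z2m_Zn_group_set m n : group_set (Z2m_Zn m n).
Proof. exact: groupP (setX_group _ _). Qed.
Canonical Z2m_Zn_group m n := Group (Z2m_Zn_group_set m n).

From HB Require Import structures.
From mathcomp Require Import all_boot all_fingroup all_algebra all_solvable.
Set Implicit Arguments. Unset Strict Implicit. Unset Printing Implicit Defensive.
Local Open Scope group_scope.

(* An isomorphism of enhanced power graphs preserves, in both directions, the
   relation "x and y generate a cyclic group". In (Z_2)^m x Z_n with n odd, h and
   h' generate a cyclic group iff their (Z_2)^m-components are equal or one of
   them is trivial, so the first coordinate transported to G is a map
   g : G -> (Z_2)^m with fibres of size n that governs cyclicity in G in the same
   way. If m = 1 every pair generates a cyclic group, and G is cyclic of order 2n.
   If m >= 2 the fibre over 1 is the set of dominating vertices, which in any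
   group is a central cyclic subgroup; for v <> 1 the fibres over 1 and v form a
   cyclic group of order 2n, generated by any element of maximal order in the
   fibre over v, so all squares are dominating. A Sylow 2-subgroup is
   therefore elementary abelian of order 2^m, and G is its direct product with
   the dominating subgroup. *)

Section CyclicPairs.

Variable gT : finGroupType.
Implicit Types (x y z w : gT) (G : {group gT}).

Definition cyclic_pair x y := cyclic <<[set x; y]>>.

Lemma cyclic_pairC x y : cyclic_pair x y = cyclic_pair y x.
Proof. by rewrite /cyclic_pair setUC. Qed.

Lemma cyclic_pair_cycle w x y : x \in <[w]> -> y \in <[w]> -> cyclic_pair x y.
Proof.
move=> xw yw; apply: cyclicS (cycle_cyclic w).
by rewrite gen_subG subUset !sub1set xw yw.
Qed.

Lemma cyclic_pairxx x : cyclic_pair x x.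
Proof. exact: (cyclic_pair_cycle (cycle_id x) (cycle_id x)). Qed.

Lemma cyclic_pair_gen x y :
  cyclic_pair x y -> exists w, [/\ <<[set x; y]>> = <[w]>, x \in <[w]> & y \in <[w]>].
Proof.
case/cyclicP=> w def_w; exists w; rewrite -def_w.
by split=> //; apply: mem_gen; rewrite !inE eqxx ?orbT.
Qed.

Lemma cyclic_pair_commute x y : cyclic_pair x y -> commute x y.
Proof.
case/cyclic_pair_gen=> w [_ xw yw].
exact: (centsP (cycle_abelian w)).
Qed.

Lemma cycle_eq_order z w : z \in <[w]> -> #[w] <= #[z] -> <[z]> = <[w]>.
Proof. by move=> zw le_wz; apply/eqP; rewrite eqEcard cycle_subG zw. Qed.

Lemma cyclic_pairsP G : reflect {in G &, forall x y, cyclic_pair x y} (cyclic G).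
Proof.
apply: (iffP idP) => [cycG x y xG yG | cyc2].
  by apply: cyclicS cycG; rewrite gen_subG subUset !sub1set xG yG.
have [z zG max_z] := arg_maxnP (fun z => #[z]) (group1 G).
have {}zG : z \in G := zG.
apply/cyclicP; exists z; apply/eqP; rewrite eqEsubset cycle_subG zG andbT.
apply/subsetP=> y yG; have [w [def_w yw zw]] := cyclic_pair_gen (cyc2 _ _ yG zG).
have wG : w \in G by rewrite -cycle_subG -def_w gen_subG subUset !sub1set yG zG.
by rewrite (cycle_eq_order zw (max_z w wG)).
Qed.

Definition epg_dom (A : {set gT}) := [set x in A | [forall y in A, cyclic_pair x y]].

Lemma epg_domP G x :
  reflect (x \in G /\ {in G, forall y, cyclic_pair x y}) (x \in epg_dom G).
Proof.
rewrite inE; apply: (iffP andP) => [[xG /forall_inP] | [xG cyc_x]] //.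
by split=> //; apply/forall_inP.
Qed.

Lemma group_set_epg_dom G : group_set (epg_dom G).
Proof.
apply/group_setP; split.
  by apply/epg_domP; split=> // y _; apply: cyclic_pair_cycle (group1 _) (cycle_id y).
move=> x1 x2 /epg_domP[x1G cyc_x1] /epg_domP[x2G cyc_x2].
apply/epg_domP; split=> [|y yG]; first exact: groupM.
have [w [def_w x1w yw]] := cyclic_pair_gen (cyc_x1 y yG).
have wG : w \in G by rewrite -cycle_subG -def_w gen_subG subUset !sub1set x1G yG.
have [u [_ x2u wu]] := cyclic_pair_gen (cyc_x2 w wG).
have sub_wu : <[w]> \subset <[u]> by rewrite cycle_subG.
apply: (cyclic_pair_cycle (w := u)); last exact: (subsetP sub_wu).
by rewrite groupM // (subsetP sub_wu).
Qed.

Canonical epg_dom_group G := Group (group_set_epg_dom G).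

Lemma epg_dom_sub G : epg_dom G \subset G.
Proof. by apply/subsetP=> x /epg_domP[]. Qed.

Lemma cents_epg_dom G : G \subset 'C(epg_dom G).
Proof.
apply/centsP=> y yG x /epg_domP[_ cyc_x].
by apply: commute_sym; apply: cyclic_pair_commute; apply: cyc_x.
Qed.

Lemma cyclic_epg_dom G : cyclic (epg_dom G).
Proof.
apply/cyclic_pairsP=> x y /epg_domP[_ cyc_x] /epg_domP[yG _]; exact: cyc_x.
Qed.

End CyclicPairs.

Section CyclicPairsFibred.

Variables (gT : finGroupType) (G : {group gT}) (T : eqType) (one : T).
Variables (g : gT -> T) (n : nat).
Hypothesis cyclic_pairE :
  {in G &, forall x y, cyclic_pair x y = [|| g x == one, g y == one | g x == g y]}.
Hypothesis card_fibre : forall v, #|[set x in G | g x == v]| = n.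
Hypothesis avoid2 : forall v, exists w, (w != one) && (w != v).

Local Notation fibre v := [set x in G | g x == v].

Lemma fibre_nonempty v : exists2 x, x \in G & g x = v.
Proof.
have /card_gt0P[x] : 0 < #|fibre v|.
  rewrite card_fibre -(card_fibre (g 1)).
  by apply/card_gt0P; exists 1; rewrite inE group1 /=.
by rewrite inE => /andP[xG /eqP]; exists x.
Qed.

Lemma cyclic_pair_fibre x z : x \in G -> z \in G -> g z != one ->
  cyclic_pair x z = (g x == one) || (g x == g z).
Proof. by move=> xG zG /negbTE z1; rewrite cyclic_pairE // z1. Qed.

Lemma fibre_one_epg_dom : fibre one = epg_dom G.
Proof.
apply/setP=> x; rewrite inE; apply/andP/epg_domP=> [[xG /eqP x1] | [xG cyc_x]].
  by split=> // y yG; rewrite cyclic_pairE // x1 eqxx.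
split=> //; apply/negPn/negP=> x1.
have [w /andP[w1 wx]] := avoid2 (g x); have [y yG gy] := fibre_nonempty w.
move: (cyc_x y yG); rewrite cyclic_pairC cyclic_pair_fibre // gy.
by rewrite (negbTE w1) (negbTE wx).
Qed.

Lemma card_epg_dom : #|epg_dom G| = n.
Proof. by rewrite -fibre_one_epg_dom card_fibre. Qed.

Lemma cycle_fibre_one_fibre v : v != one ->
  exists z, <[z]> = fibre one :|: fibre v.
Proof.
move=> v1; have [x0 x0G gx0] := fibre_nonempty v.
have x0v : x0 \in fibre v by rewrite inE x0G gx0 eqxx.
have [z zv max_z] := arg_maxnP (fun z => #[z]) x0v.
have : z \in fibre v := zv; rewrite inE => /andP[zG /eqP gz].
have cyc_z y : y \in G -> cyclic_pair y z = (y \in fibre one :|: fibre v).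
  by move=> yG; rewrite cyclic_pair_fibre ?gz // !inE yG.
exists z; apply/setP=> y; apply/idP/idP=> [yz | ].
  have yG : y \in G by apply: subsetP yz; rewrite cycle_subG.
  by rewrite -cyc_z //; apply: cyclic_pair_cycle yz (cycle_id z).
have [y1 | ] := boolP (y \in G); last by rewrite !inE => /negbTE->.
rewrite -cyc_z // => /cyclic_pair_gen[w [def_w yw zw]].
have wG : w \in G by rewrite -cycle_subG -def_w gen_subG subUset !sub1set y1 zG.
have : w \in fibre one :|: fibre v.
  by rewrite -cyc_z // cyclic_pairC; apply: cyclic_pair_cycle zw (cycle_id w).
rewrite in_setU fibre_one_epg_dom => /orP[w_dom | wv].
  have : z \in epg_dom G by apply: subsetP zw; rewrite cycle_subG.
  by rewrite -fibre_one_epg_dom inE zG gz (negbTE v1).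
by rewrite (cycle_eq_order zw (max_z w wv)).
Qed.

Lemma expg2_epg_dom x : x \in G -> x ^+ 2 \in epg_dom G.
Proof.
move=> xG; have [x_dom | x_dom] := boolP (x \in epg_dom G); first exact: groupX.
have x1 : g x != one by rewrite -fibre_one_epg_dom inE xG in x_dom.
have [z def_z] := cycle_fibre_one_fibre x1.
have oz : #[z] = (2 * n)%N.
  rewrite /order def_z cardsU card_fibre card_fibre.
  suff -> : fibre one :&: fibre (g x) = set0 by rewrite cards0 subn0 mul2n addnn.
  apply/setP=> y; rewrite !inE; apply/negP=> /andP[/andP[_ /eqP y1] /andP[_ /eqP yx]].
  by move: x1; rewrite -yx y1 eqxx.
have dom_z2 : epg_dom G = <[z ^+ 2]>.
  apply/eqP; rewrite (eq_subG_cyclic (cycle_cyclic z)) ?cycle_subG ?groupX ?cycle_id //.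
    by rewrite card_epg_dom -orderE orderXdiv oz ?dvdn_mulr // mulKn.
  by rewrite /= def_z -fibre_one_epg_dom subsetUl.
have /cycleP[k ->] : x \in <[z]> by rewrite def_z !inE xG eqxx orbT.
by rewrite dom_z2 -expgM mulnC expgM mem_cycle.
Qed.

End CyclicPairsFibred.

Lemma central_odd_dprod (gT : finGroupType) (G D : {group gT}) (m n : nat) :
    #|G| = (2 ^ m * n)%N -> odd n -> #|D| = n -> D \subset G ->
    G \subset 'C(D) -> {in G, forall x, x ^+ 2 \in D} ->
  exists S : {group gT}, [/\ S \x D = G, 2.-abelem S & #|S| = (2 ^ m)%N].
Proof.
move=> oG odd_n oD sDG cGD sqD.
have [S sylS] := Sylow_exists 2 G; have sSG := pHall_sub sylS.
have oS : #|S| = (2 ^ m)%N.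
  rewrite (card_Hall sylS) oG partnM ?expn_gt0 ?(odd_gt0 odd_n) //.
  by rewrite part_pnat_id ?pnatX ?pnat_id // part_p'nat ?muln1 // -odd_2'nat.
have tiDS : D :&: S = 1 by apply: coprime_TIg; rewrite oD oS coprimeXr // coprimen2.
have sq1 s : s \in S -> s ^+ 2 = 1.
  move=> sS; have : s ^+ 2 \in D :&: S by rewrite inE sqD ?groupX ?(subsetP sSG).
  by rewrite tiDS => /set1P.
exists S; split=> //.
  rewrite dprodC dprodE ?(subset_trans sSG cGD) //.
  by apply/eqP; rewrite eqEcard mul_subG //= (TI_cardMg tiDS) oG oD oS mulnC.
apply/abelemP=> //; split=> //; apply/centsP=> s sS t tS.
have invE u : u \in S -> u^-1 = u by move=> uS; apply/eqP; rewrite eq_invg_mul -expg2 sq1.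
by rewrite /commute -{1}(invE _ (groupM sS tS)) invMg !invE.
Qed.

Lemma cyclic_setX (aT bT : finGroupType) (A : {group aT}) (B : {group bT}) :
  cyclic A -> cyclic B -> coprime #|A| #|B| -> cyclic (setX A B).
Proof.
move=> cycA cycB coAB; rewrite (cyclic_dprod (setX_dprod A B)).
- by rewrite !cardsX !cards1 muln1 mul1n.
- by rewrite -(isog_cyclic (isog_setX1 _ A)).
by rewrite -(isog_cyclic (isog_set1X _ B)).
Qed.

Lemma cyclic_Zp n : cyclic (Zp n).
Proof. by rewrite /Zp; case: ifP => _; rewrite ?Zp_cycle ?cycle_cyclic ?cyclic1. Qed.

Lemma card_in_imset_sep (aT rT : finType) (f : aT -> rT) (A : {set aT}) (P : pred rT) :
  {in A &, injective f} -> #|[set x in A | P (f x)]| = #|[set y in f @: A | P y]|.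
Proof.
move=> injf; rewrite -(card_in_imset (sub_in2 _ injf)); last by move=> x /setIdP[].
apply: eq_card=> y; apply/imsetP/setIdP=> [[x /setIdP[xA Pfx] ->] | ].
  by rewrite imset_f.
case=> /imsetP[x xA ->] Pfx.
by exists x; rewrite ?inE ?xA.
Qed.

Lemma epg_adj_cyclic_pair (gT hT : finGroupType) (G : {set gT}) (f : gT -> hT) :
    {in G &, injective f} ->
    {in G &, forall x y, epg_adj (f x) (f y) = epg_adj x y} ->
  {in G &, forall x y, cyclic_pair (f x) (f y) = cyclic_pair x y}.
Proof.
move=> injf adjf x y xG yG.
have [<- | xy] := eqVneq x y; first by rewrite !cyclic_pairxx.
by have := adjf x y xG yG; rewrite /epg_adj (inj_in_eq injf) // xy.
Qed.

Lemma isog_epg_isomorphic (gT hT : finGroupType) (G : {group gT}) (H : {group hT}) :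
  G \isog H -> epg_isomorphic G H.
Proof.
case/isogP=> f injf imf; have injf' : {in G &, injective f} by apply/injmP.
exists f; split=> //; first by rewrite -morphimEdom.
move=> x y xG yG; rewrite /epg_adj (inj_in_eq injf') //; congr (_ && _).
have sxyG : [set x; y] \subset G by rewrite subUset !sub1set xG yG.
have -> : [set f x; f y] = f @* [set x; y] by rewrite morphimU !morphim_set1.
by rewrite -morphim_gen // injm_cyclic // gen_subG.
Qed.

Local Notation Z2m m := {dffun forall i : 'I_m, 'Z_2}.

Lemma expg2_Z2m m (a : Z2m m) : a ^+ 2 = 1.
Proof.
apply/ffunP=> i; rewrite expg2 !ffunE -expg2.
by have := expg_cardG (in_setT (a i)); rewrite cardsT card_ord.
Qed.

Lemma abelem_Z2m m : 2.-abelem [set: Z2m m].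
Proof.
apply/abelemP=> //; split=> [|a _]; last exact: expg2_Z2m.
apply/centsP=> a _ b _; apply/ffunP=> i.
by rewrite /commute !mulg_ffun; apply: Zp_mulgC.
Qed.

Lemma card_Z2m m : #|Z2m m| = (2 ^ m)%N.
Proof. by rewrite card_ffun !card_ord. Qed.

Lemma card_Z2m_Zn m n : 0 < n -> #|Z2m_Zn m n| = (2 ^ m * n)%N.
Proof. by move=> n_gt0; rewrite cardsX cardsT card_Z2m card_Zp. Qed.

Lemma expg_Z2m m (a : Z2m m) k : a ^+ k = if odd k then a else 1.
Proof.
rewrite -[in LHS](odd_double_half k) expgD -mul2n expgM expg2_Z2m expg1n mulg1.
by case: (odd k).
Qed.

Lemma Z2m1_trichotomy (a b : Z2m 1) : [|| a == 1, b == 1 | a == b].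
Proof.
apply/negPn/negP; rewrite !negb_or => /and3P[a1 b1 ab].
have := max_card (b |: [set 1; a]); rewrite card_Z2m cardsU1 cards2 !inE.
by rewrite (negbTE b1) eq_sym (negbTE ab) eq_sym a1.
Qed.

Lemma Z2m_avoid2 m (v : Z2m m) : 1 < m -> exists w, (w != 1) && (w != v).
Proof.
move=> m_gt1; have : 0 < #|~: [set 1; v]|.
  rewrite cardsCs setCK card_Z2m subn_gt0 cards2.
  have le4 : 4 <= 2 ^ m by rewrite (@leq_exp2l 2 2 m).
  by apply: leq_trans le4; case: (1 != v).
by case/card_gt0P=> w; rewrite !inE negb_or; exists w.
Qed.

Lemma cyclic_pair_Z2m_Zn m n (h h' : Z2m_Zn_type m n) : odd n ->
    h \in Z2m_Zn m n -> h' \in Z2m_Zn m n ->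
  cyclic_pair h h' = [|| h.1 == 1, h'.1 == 1 | h.1 == h'.1].
Proof.
move=> odd_n hH h'H; apply/idP/idP.
  case/cyclic_pair_gen=> u [_ /cycleP[i ->] /cycleP[j ->]].
  have fstX k : (u ^+ k).1 = u.1 ^+ k := morphX (fst_morphism _ _) k (in_setT u).
  rewrite !fstX !expg_Z2m.
  by case: (odd i); case: (odd j); rewrite !eqxx ?orbT.
pose v := if h.1 == 1 then h'.1 else h.1.
move=> h_cases; have [hv h'v] : h.1 \in <[v]> /\ h'.1 \in <[v]>.
  rewrite /v; case: ifPn => [/eqP-> | h1]; first by rewrite group1 cycle_id.
  move: h_cases; rewrite (negbTE h1) /=.
  by case/orP=> [/eqP-> | /eqP<-]; rewrite ?group1 cycle_id.
have cyc_v : cyclic (setX <[v]> (Zp n)).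
  apply: cyclic_setX; rewrite ?cycle_cyclic ?cyclic_Zp // card_Zp ?odd_gt0 //.
  by apply: (@coprime_dvdl _ 2); rewrite ?coprime2n // -orderE order_dvdn expg2_Z2m.
apply: cyclicS cyc_v; rewrite gen_subG subUset !sub1set.
clearbody v; move: hH h'H hv h'v {h_cases}; case: h => a b; case: h' => c d.
by rewrite !in_setX /= => /andP[_ ->] /andP[_ ->] -> ->.
Qed.

Lemma card_fibre_Z2m_Zn m n (v : Z2m m) :
  0 < n -> #|[set h in Z2m_Zn m n | h.1 == v]| = n.
Proof.
move=> n_gt0; transitivity #|setX [set v] (Zp n)|.
  by apply: eq_card=> -[a b]; rewrite !inE andbC.
by rewrite cardsX cards1 mul1n card_Zp.
Qed.

Lemma isog_Z2m_Zn_fibred (gT : finGroupType) (G : {group gT}) m n (g : gT -> Z2m m) :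
    0 < m -> 0 < n -> odd n -> #|G| = (2 ^ m * n)%N ->
    {in G &, forall x y, cyclic_pair x y = [|| g x == 1, g y == 1 | g x == g y]} ->
    (forall v, #|[set x in G | g x == v]| = n) ->
  G \isog Z2m_Zn m n.
Proof.
move=> m_gt0 n_gt0 odd_n oG cyclic_pairE card_fibre.
have [m_gt1 | ] := ltnP 1 m; last first.
  rewrite leq_eqVlt ltnS leqNgt m_gt0 orbF => /eqP m1; subst m.
  have cycG : cyclic G.
    by apply/cyclic_pairsP=> x y xG yG; rewrite cyclic_pairE ?Z2m1_trichotomy.
  rewrite (isog_cyclic_card _ cycG) card_Z2m_Zn // oG eqxx andbT.
  apply: cyclic_setX (cyclic_Zp n) _; first by rewrite prime_cyclic // cardsT card_Z2m.
  by rewrite cardsT card_Z2m card_Zp // coprime2n.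
have avoid2 v := Z2m_avoid2 v m_gt1.
have oD : #|epg_dom G| = n := card_epg_dom cyclic_pairE card_fibre avoid2.
have [S [dS abS oS]] := central_odd_dprod oG odd_n oD (epg_dom_sub G)
  (cents_epg_dom G) (expg2_epg_dom cyclic_pairE card_fibre avoid2).
apply: isog_dprod dS (setX_dprod [set: Z2m m]%G (Zp n)%G) _ _.
  rewrite (isog_abelem_card _ abS) cardsX cardsT card_Z2m cards1 muln1 oS eqxx andbT.
  by rewrite -(isog_abelem (isog_setX1 _ [set: Z2m m]%G)) abelem_Z2m.
rewrite (isog_cyclic_card _ (cyclic_epg_dom G)) cardsX cards1 mul1n card_Zp // oD.
by rewrite eqxx andbT -(isog_cyclic (isog_set1X _ (Zp n)%G)) cyclic_Zp.
Qed.

Local Close Scope group_scope.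

Theorem theorem6 (gT : finGroupType) (G : {group gT}) (m n : nat) :
  0 < m -> 0 < n -> odd n ->
  (epg_isomorphic G (Z2m_Zn m n) <-> (G \isog Z2m_Zn m n)%g).
Proof.
move=> m_gt0 n_gt0 odd_n; split; last exact: isog_epg_isomorphic.
case=> f [injf imf adjf]; have fG x : x \in G -> f x \in Z2m_Zn m n.
  by move=> xG; rewrite -imf imset_f.
apply: (isog_Z2m_Zn_fibred (g := fun x => (f x).1)) => //.
- by rewrite -card_Z2m_Zn // -imf card_in_imset.
- move=> x y xG yG /=.
  by rewrite -(epg_adj_cyclic_pair injf adjf) // cyclic_pair_Z2m_Zn ?fG.
move=> v; rewrite (card_in_imset_sep (fun h => h.1 == v) injf) imf.
exact: card_fibre_Z2m_Zn.
Qed.
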